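(* Consider a fleet of $N^{\mathrm{B}}$ buildings indexed by $b\in\{1,\dots,N^{\mathrm{B}}\}$, building $b$ having $N_b^{\mathrm{I}}$ zones, over periods $t\in\{1,\dots,N^{\mathrm{T}}\}$. Fix a period $t$, and for each building $b$ fix a current state $\mathbf{T}^{\mathrm{in}}_{b,t-1}\in\mathbb{R}^{N_b^{\mathrm{I}}}$ and a realized exogenous vector $\mathbf{W}_{b,t}\in\mathcal{W}_{b,t}$. Let $\widetilde{\mathcal{U}}_{b,t}$ denote the set of pairs $[\mathbf{T}^{\mathrm{in}}_{b,t};\mathbf{P}^{\mathrm{ac}}_{b,t}]\in\mathbb{R}^{2N_b^{\mathrm{I}}}$ satisfying $\mathbf{A}^{\mathrm{eq}1}_{b,t}\mathbf{T}^{\mathrm{in}}_{b,t-1}+\mathbf{A}^{\mathrm{eq}2}_{b,t}\mathbf{T}^{\mathrm{in}}_{b,t}+\mathbf{A}^{\mathrm{eq}3}_{b,t}\mathbf{P}^{\mathrm{ac}}_{b,t}+\mathbf{A}^{\mathrm{eq}4}_{b,t}\mathbf{W}_{b,t}=\mathbf{b}^{\mathrm{eq}}_{b,t}$, $\mathbf{A}^{\mathrm{ieq}1}_{b,t}\mathbf{T}^{\mathrm{in}}_{b,t}+\mathbf{A}^{\mathrm{ieq}2}_{b,t}\mathbf{P}^{\mathrm{ac}}_{b,t}\le\mathbf{b}^{\mathrm{ieq}}_{b,t}$, and $\mathbf{T}^{\mathrm{in}}_{b,t}\in\mathcal{T}^{\mathrm{aff}}_{b,t}$, where $\mathcal{T}^{\mathrm{aff}}_{b,t}=\mathbf{\Gamma}^{\mathrm{aff}}_{b,t}\{\mathbf{z}:\|\mathbf{z}\|_\infty\le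 1\}+\boldsymbol{\gamma}^{\mathrm{aff}}_{b,t}$ is a polytope satisfying $\mathcal{T}^{\mathrm{aff}}_{b,t}\subseteq\mathcal{T}^{\mathrm{rch}}_{b,t}$. For each $b$, let $[\mathbf{T}^{\mathrm{in},\uparrow}_{b,t};\mathbf{P}^{\mathrm{ac},\uparrow}_{b,t}]$ and $[\mathbf{T}^{\mathrm{in},\downarrow}_{b,t};\mathbf{P}^{\mathrm{ac},\downarrow}_{b,t}]$ be (parts of) an optimal solution of the linear program that maximizes $P^{\mathrm{bld},\uparrow}_{b,t}-P^{\mathrm{bld},\downarrow}_{b,t}$ subject to $P^{\mathrm{bld},\uparrow}_{b,t}=\sum_{i=1}^{N_b^{\mathrm{I}}}P^{\mathrm{ac},\uparrow}_{b,i,t}$, $P^{\mathrm{bld},\downarrow}_{b,t}=\sum_{i=1}^{N_b^{\mathrm{I}}}P^{\mathrm{ac},\downarrow}_{b,i,t}$, and both $[\mathbf{T}^{\mathrm{in},\uparrow}_{b,t};\mathbf{P}^{\mathrm{ac},\uparrow}_{b,t}]$ and $[\mathbf{T}^{\mathrm{in},\downarrow}_{b,t};\mathbf{P}^{\mathrm{ac},\downarrow}_{b,t}]$ belonging to $\widetilde{\mathcal{U}}_{b,t}$ (with $P^{\mathrm{bld},\uparrow}_{b,t}$, $P^{\mathrm{bld},\downarrow}_{b,t}$ the corresponding optimal values of these sums). Assume $\sum_{b}P^{\mathrm{bld},\uparrow}_{b,t}>\sum_{b}P^{\mathrm{bld},\downarrow}_{b,t}$. Given any $P^{\mathrm{reg}}_t\in\left[\sum_{b=1}^{N^{\mathrm{B}}}P^{\mathrm{bld},\downarrow}_{b,t},\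 \sum_{b=1}^{N^{\mathrm{B}}}P^{\mathrm{bld},\uparrow}_{b,t}\right]$, define $$\lambda_t:=\frac{P^{\mathrm{reg}}_t-\sum_{b=1}^{N^{\mathrm{B}}}P^{\mathrm{bld},\downarrow}_{b,t}}{\sum_{b=1}^{N^{\mathrm{B}}}P^{\mathrm{bld},\uparrow}_{b,t}-\sum_{b=1}^{N^{\mathrm{B}}}P^{\mathrm{bld},\downarrow}_{b,t}}\in[0,1],$$ and for each building $b$ set $$[\mathbf{T}^{\mathrm{in}}_{b,t};\mathbf{P}^{\mathrm{ac}}_{b,t}]=(1-\lambda_t)[\mathbf{T}^{\mathrm{in},\downarrow}_{b,t};\mathbf{P}^{\mathrm{ac},\downarrow}_{b,t}]+\lambda_t[\mathbf{T}^{\mathrm{in},\uparrow}_{b,t};\mathbf{P}^{\mathrm{ac},\uparrow}_{b,t}].$$ Then: (i) for every $b$, $[\mathbf{T}^{\mathrm{in}}_{b,t};\mathbf{P}^{\mathrm{ac}}_{b,t}]\in\widetilde{\mathcal{U}}_{b,t}$, so the thermal dynamics, comfort and power constraints at period $t$ hold; (ii) $\sum_{b=1}^{N^{\mathrm{B}}}\sum_{i=1}^{N_b^{\mathrm{I}}}P^{\mathrm{ac}}_{b,i,t}=P^{\mathrm{reg}}_t$; and (iii) for every $b$, $\mathbf{T}^{\mathrm{in}}_{b,t}\in\mathcal{T}^{\mathrm{rch}}_{b,t}$, i.e., there exists a feasible causal continuation over the remaining horizon for all admissible future realizations of the exogenous inputs. Moreover, this profile depends only on the current states $\mathbf{T}^{\mathrm{in}}_{b,t-1}$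 and current realizations $\mathbf{W}_{b,t}$.
   Context: Model of a multi-zone HVAC building $b$: indoor temperature vector $\mathbf{T}^{\mathrm{in}}_{b,t}\in\mathbb{R}^{N_b^{\mathrm{I}}}$ and HVAC power vector $\mathbf{P}^{\mathrm{ac}}_{b,t}\in\mathbb{R}^{N_b^{\mathrm{I}}}$ (components $P^{\mathrm{ac}}_{b,i,t}$) at period $t$; exogenous input $\mathbf{W}_{b,t}=[T^{\mathrm{out}}_{b,t};Q^{\mathrm{rad}}_{b,t}]\in\mathbb{R}^2$ (outdoor temperature, solar radiation) ranges over the box $\mathcal{W}_{b,t}=\{\mathbf{W}:\underline{\mathbf{W}}_{b,t}\le\mathbf{W}\le\overline{\mathbf{W}}_{b,t}\}$. The per-period constraints are the linear thermal dynamics $\mathbf{A}^{\mathrm{eq}1}_{b,t}\mathbf{T}^{\mathrm{in}}_{b,t-1}+\mathbf{A}^{\mathrm{eq}2}_{b,t}\mathbf{T}^{\mathrm{in}}_{b,t}+\mathbf{A}^{\mathrm{eq}3}_{b,t}\mathbf{P}^{\mathrm{ac}}_{b,t}+\mathbf{A}^{\mathrm{eq}4}_{b,t}\mathbf{W}_{b,t}=\mathbf{b}^{\mathrm{eq}}_{b,t}$ (given matrices/vectors) and the comfort/power limits $\mathbf{A}^{\mathrm{ieq}1}_{b,t}\mathbf{T}^{\mathrm{in}}_{b,t}+\mathbf{A}^{\mathrm{ieq}2}_{b,t}\mathbf{P}^{\mathrm{ac}}_{b,t}\le\mathbf{b}^{\mathrm{ieq}}_{b,t}$ (encoding box bounds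 on each zone temperature and zone power). Backward reachable sets: $\mathcal{T}^{\mathrm{rch}}_{b,N^{\mathrm{T}}}:=\mathbb{R}^{N_b^{\mathrm{I}}}$, and for $t\in\{1,\dots,N^{\mathrm{T}}\}$, $\mathcal{T}^{\mathrm{rch}}_{b,t-1}$ is the set of $\mathbf{T}^{\mathrm{in}}_{b,t-1}$ such that for every $\mathbf{W}_{b,t}\in\mathcal{W}_{b,t}$ there exist $\mathbf{T}^{\mathrm{in}}_{b,t},\mathbf{P}^{\mathrm{ac}}_{b,t}$ satisfying the dynamics equation and limit inequalities at period $t$ together with $\mathbf{T}^{\mathrm{in}}_{b,t}\in\mathcal{T}^{\mathrm{rch}}_{b,t}$. ''Feasible causal continuation over the remaining horizon'' means membership in these reachable sets. *)

From HB Require Import structures.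
From mathcomp Require Import all_boot all_order all_algebra.
Unset Printing Implicit Defensive.
Import Order.TTheory GRing.Theory Num.Theory.
Local Open Scope ring_scope.

(* Data of one HVAC building: number of zones [nz], and for every period s
   the matrices/vectors of the thermal dynamics (meq s rows), of the
   comfort/power limits (mieq s rows), and the box [Wlo s, Whi s] of
   exogenous inputs W = [T^out; Q^rad] in R^2. *)
Record building (R : realFieldType) := Building {
  nz : nat;
  meq : nat -> nat;
  mieq : nat -> nat;
  Aeq1 : forall s, 'M[R]_(meq s, nz);
  Aeq2 : forall s, 'M[R]_(meq s, nz);
  Aeq3 : forall s, 'M[R]_(meq s, nz);
  Aeq4 : forall s, 'M[R]_(meq s, 2);
  beq  : forall s, 'cV[R]_(meq s);
  Aieq1 : forall s, 'M[R]_(mieq s, nz);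
  Aieq2 : forall s, 'M[R]_(mieq s, nz);
  bieq  : forall s, 'cV[R]_(mieq s);
  Wlo : nat -> 'cV[R]_2;
  Whi : nat -> 'cV[R]_2 }.

Arguments nz {R}. Arguments meq {R}. Arguments mieq {R}.
Arguments Aeq1 {R}. Arguments Aeq2 {R}. Arguments Aeq3 {R}. Arguments Aeq4 {R}.
Arguments beq {R}. Arguments Aieq1 {R}. Arguments Aieq2 {R}. Arguments bieq {R}.
Arguments Wlo {R}. Arguments Whi {R}.

Section Defs.
Context {R : realFieldType}.

Definition mxle {m n} (A B : 'M[R]_(m, n)) : Prop := forall i j, A i j <= B i j.

Definition period_cons (B : building R) (s : nat)
  (Tp T P : 'cV[R]_(nz B)) (W : 'cV[R]_2) : Prop :=
  Aeq1 B s *m Tp + Aeq2 B s *m T + Aeq3 B s *m P + Aeq4 B s *m W = beq B s /\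
  mxle (Aieq1 B s *m T + Aieq2 B s *m P) (bieq B s).

Definition Wset (B : building R) (s : nat) (W : 'cV[R]_2) : Prop :=
  mxle (Wlo B s) W /\ mxle W (Whi B s).

(* reach_aux B NT d = T^rch_{NT - d} (backward recursion from T^rch_NT = R^n) *)
Fixpoint reach_aux (B : building R) (NT d : nat) : 'cV[R]_(nz B) -> Prop :=
  match d with
  | 0 => fun _ => True
  | d'.+1 => fun Tp => forall W, Wset B (NT - d') W ->
      exists T P, period_cons B (NT - d') Tp T P W /\ reach_aux B NT d' T
  end.

Definition Trch (B : building R) (NT t : nat) : 'cV[R]_(nz B) -> Prop :=
  reach_aux B NT (NT - t).

Definition Taff {n k} (G : 'M[R]_(n, k)) (g : 'cV[R]_n) (x : 'cV[R]_n) : Prop :=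
  exists z : 'cV[R]_k, (forall i, `|z i 0| <= 1) /\ x = G *m z + g.

Definition Utilde (B : building R) (s : nat) (Tp : 'cV[R]_(nz B)) (W : 'cV[R]_2)
  {k} (G : 'M[R]_(nz B, k)) (g : 'cV[R]_(nz B)) (T P : 'cV[R]_(nz B)) : Prop :=
  period_cons B s Tp T P W /\ Taff G g T.

Definition Pbld {n} (P : 'cV[R]_n) : R := \sum_(i < n) P i 0.

Definition mixv {n} (l : R) (x y : 'cV[R]_n) : 'cV[R]_n := (1 - l) *: x + l *: y.

End Defs.

From HB Require Import structures.
From mathcomp Require Import all_boot all_order all_algebra.
From mathcomp Require Import ring.
Import Order.TTheory GRing.Theory Num.Theory.
Local Open Scope ring_scope.

(* Every constraint defining U~ (the dynamics equation, the limit
   inequalities and membership in the polytope T^aff) is affine in (T, P)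
   for fixed current state and realization, so U~ is convex and contains
   every convex combination of the "up" and "down" solutions.  The weight
   lam is the one for which the aggregate power, which is affine in lam,
   equals P^reg; and T^aff is contained in T^rch. *)

Section ConvexCombination.
Context {R : realFieldType}.

Lemma ler_convex (l a b c : R) : 0 <= l <= 1 -> a <= c -> b <= c ->
  (1 - l) * a + l * b <= c.
Proof.
case/andP=> l_ge0 l_le1 a_le b_le.
have -> : c = (1 - l) * c + l * c by ring.
by rewrite lerD // ler_wpM2l // subr_ge0.
Qed.

Lemma interpolation_weight (a b p : R) : a < b -> a <= p <= b ->
  let l := (p - a) / (b - a) in (0 <= l <= 1) /\ (1 - l) * a + l * b = p.
Proof.
move=> ab /andP[ap pb] l; have ba_gt0 : 0 < b - a by rewrite subr_gt0.
split.
  rewrite /l divr_ge0 ?subr_ge0 ?(ltW ab) //=.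
  by rewrite ler_pdivrMr // mul1r lerB.
have -> : (1 - l) * a + l * b = a + l * (b - a) by ring.
by rewrite /l mulfVK ?gt_eqF //; ring.
Qed.

Lemma mixvE n l (x y : 'cV[R]_n) i j :
  mixv l x y i j = (1 - l) * x i j + l * y i j.
Proof. by rewrite !mxE. Qed.

Lemma mixvv n l (x : 'cV[R]_n) : mixv l x x = x.
Proof. by rewrite /mixv -scalerDl subrK scale1r. Qed.

Lemma mixvD n l (x1 x2 y1 y2 : 'cV[R]_n) :
  mixv l (x1 + x2) (y1 + y2) = mixv l x1 y1 + mixv l x2 y2.
Proof. by rewrite /mixv !scalerDr addrACA. Qed.

Lemma mulmx_mixv m n (A : 'M[R]_(m, n)) l (x y : 'cV[R]_n) :
  A *m mixv l x y = mixv l (A *m x) (A *m y).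
Proof. by rewrite /mixv mulmxDr !scalemxAr. Qed.

Lemma mxle_mixv n l (x y c : 'cV[R]_n) : 0 <= l <= 1 ->
  mxle x c -> mxle y c -> mxle (mixv l x y) c.
Proof. by move=> l01 xc yc i j; rewrite mixvE ler_convex. Qed.

Lemma Pbld_mixv n l (x y : 'cV[R]_n) :
  Pbld (mixv l x y) = (1 - l) * Pbld x + l * Pbld y.
Proof.
by rewrite /Pbld !mulr_sumr -big_split; apply: eq_bigr => i _; rewrite mixvE.
Qed.

Lemma sum_Pbld_mixv (I : finType) (n : I -> nat) l
    (x y : forall i, 'cV[R]_(n i)) :
  \sum_i Pbld (mixv l (x i) (y i)) =
  (1 - l) * \sum_i Pbld (x i) + l * \sum_i Pbld (y i).
Proof.
rewrite !mulr_sumr -big_split; apply: eq_bigr => i _; exact: Pbld_mixv.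
Qed.

End ConvexCombination.

Section ConvexFeasibleSet.
Variables (R : realFieldType) (B : building R) (s : nat).
Variables (Tp : 'cV[R]_(nz B)) (W : 'cV[R]_2).
Variable l : R.
Hypothesis l01 : 0 <= l <= 1.

Lemma period_cons_mixv T1 P1 T2 P2 :
  period_cons B s Tp T1 P1 W -> period_cons B s Tp T2 P2 W ->
  period_cons B s Tp (mixv l T1 T2) (mixv l P1 P2) W.
Proof.
move=> [eq1 le1] [eq2 le2]; split; rewrite !mulmx_mixv.
  by rewrite -(mixvv _ l (beq B s)) -{1}eq1 -eq2 !mixvD !mixvv.
by rewrite -mixvD; apply: mxle_mixv.
Qed.

Lemma Taff_mixv k (G : 'M[R]_(nz B, k)) g T1 T2 :
  Taff G g T1 -> Taff G g T2 -> Taff G g (mixv l T1 T2).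
Proof.
move=> [z1 [z1_le1 ->]] [z2 [z2_le1 ->]]; have /andP[l_ge0 l_le1] := l01.
exists (mixv l z1 z2); split; last by rewrite mulmx_mixv mixvD mixvv.
move=> i; rewrite mixvE; apply: le_trans (ler_normD _ _) _.
have l'_ge0 : 0 <= 1 - l by rewrite subr_ge0.
by rewrite !normrM (ger0_norm l_ge0) (ger0_norm l'_ge0) ler_convex.
Qed.

Lemma Utilde_mixv k (G : 'M[R]_(nz B, k)) g T1 P1 T2 P2 :
  Utilde B s Tp W G g T1 P1 -> Utilde B s Tp W G g T2 P2 ->
  Utilde B s Tp W G g (mixv l T1 T2) (mixv l P1 P2).
Proof.
move=> [cons1 aff1] [cons2 aff2].
by split; [apply: period_cons_mixv | apply: Taff_mixv].
Qed.

End ConvexFeasibleSet.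

Theorem proposition2 (R : realFieldType) (NT NB : nat)
  (bld : 'I_NB -> building R) (t : nat) (ht : (1 <= t <= NT)%N)
  (kaff : 'I_NB -> nat)
  (Gam : forall b, 'M[R]_(nz (bld b), kaff b))
  (gam : forall b, 'cV[R]_(nz (bld b)))
  (Haff : forall b x, Taff (Gam b) (gam b) x -> Trch (bld b) NT t x)
  (Tprev : forall b, 'cV[R]_(nz (bld b)))
  (W : 'I_NB -> 'cV[R]_2)
  (HW : forall b, Wset (bld b) t (W b))
  (Tu Pu Td Pd : forall b, 'cV[R]_(nz (bld b)))
  (Hup : forall b, Utilde (bld b) t (Tprev b) (W b) (Gam b) (gam b) (Tu b) (Pu b))
  (Hdn : forall b, Utilde (bld b) t (Tprev b) (W b) (Gam b) (gam b) (Td b) (Pd b))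
  (Hopt : forall b (Tu' Pu' Td' Pd' : 'cV[R]_(nz (bld b))),
      Utilde (bld b) t (Tprev b) (W b) (Gam b) (gam b) Tu' Pu' ->
      Utilde (bld b) t (Tprev b) (W b) (Gam b) (gam b) Td' Pd' ->
      Pbld Pu' - Pbld Pd' <= Pbld (Pu b) - Pbld (Pd b))
  (Hgap : \sum_(b < NB) Pbld (Pd b) < \sum_(b < NB) Pbld (Pu b))
  (Preg : R)
  (HPreg : \sum_(b < NB) Pbld (Pd b) <= Preg <= \sum_(b < NB) Pbld (Pu b)) :
  let lam := (Preg - \sum_(b < NB) Pbld (Pd b)) /
             (\sum_(b < NB) Pbld (Pu b) - \sum_(b < NB) Pbld (Pd b)) in
  (0 <= lam <= 1) /\
  (forall b, Utilde (bld b) t (Tprev b) (W b) (Gam b) (gam b)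
               (mixv lam (Td b) (Tu b)) (mixv lam (Pd b) (Pu b))) /\
  (\sum_(b < NB) Pbld (mixv lam (Pd b) (Pu b)) = Preg) /\
  (forall b, Trch (bld b) NT t (mixv lam (Td b) (Tu b))).
Proof.
move=> lam; have [lam01 lam_Preg] := interpolation_weight _ _ _ Hgap HPreg.
have feasible b : Utilde (bld b) t (Tprev b) (W b) (Gam b) (gam b)
                    (mixv lam (Td b) (Tu b)) (mixv lam (Pd b) (Pu b)).
  exact: Utilde_mixv.
split=> //; split=> //; split; first by rewrite sum_Pbld_mixv.
by move=> b; apply: Haff; case: (feasible b).
Qed.
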